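(* Let $\mathcal{S}$ be a square-free staged tree and let $\mathcal{S}'$ be the staged tree obtained from $\mathcal{S}$ by a swap operator $\tau$. Let $\alpha>0$, let $\mathcal{D}=(N_\lambda)_{\lambda\in\Lambda(\mathcal{S})}$ be a complete data sample on $\mathcal{S}$, and let $\mathcal{D}'$ be the sample on $\mathcal{S}'$ with $N'_{\varphi(\lambda)}=N_\lambda$, where $\varphi:\Lambda(\mathcal{S})\to\Lambda(\mathcal{S}')$ is the bijection of root-to-leaf paths induced by $\tau$. Then $\mathrm{BDepu}(\mathcal{S},\mathcal{D};\alpha)=\mathrm{BDepu}(\mathcal{S}',\mathcal{D}';\alpha)$.
   Context: An event tree is a finite directed rooted tree whose edges are directed away from the root; nodes with no outgoing edges are leaves, all other nodes are situations. A staged tree $\mathcal{S}$ is an event tree together with a partition of its situations into stages $u_1,\dots,u_J$ such that all situations in $u_j$ have the same number $r_j$ of outgoing edges, labelled $1,\dots,r_j$ at each situation of $u_j$; the $k$-th edge of every situation in $u_j$ carries the same conditional transition probability $\theta_{jk}$. A staged tree is square-free if no two situations on the same root-to-leaf path lie in the same stage. $\Lambda(\mathcal{S})$ is the set of root-to-leaf paths and, for an edge $e$, $\Lambda(e)$ is the set of root-to-leaf paths containing $e$. Twin and swap: a twin around a stage $u$ is a subtree rooted at a situation $s_0$ with outgoing edges $e_{01},\dots,e_{0r_1}$ to children $s_{01},\dots,s_{0r_1}$, all of which lie in the same stage $u$ (each with $r_2$ outgoing edges $e_{k1},\dots,e_{kr_2}$ to nodes $s_{kt}$, the subleaves of the twin),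 so that all root-to-subleaf paths have exactly two edges. The swap of this twin replaces it by a twin rooted at $s_0'$ (in the place of $s_0$) with $r_2$ outgoing edges to children $s'_1,\dots,s'_{r_2}$, each having $r_1$ outgoing edges, the $k$-th edge of $s'_t$ leading to the node $s_{kt}$ together with the whole part of the tree below $s_{kt}$ unchanged; the new root $s_0'$ takes the role of a situation of stage $u$ (its $t$-th edge carrying the parameter of the $t$-th edge of $u$), and the new children $s'_t$ are placed in the stage of $s_0$ (their $k$-th edge carrying the parameter of the $k$-th edge of $s_0$). This induces a bijection between root-to-leaf paths (the path through $e_{0k},e_{kt}$ corresponds to the path through the $t$-th root edge and the $k$-th edge of $s'_t$). A swap operator between staged trees is a finite composition of such swaps of single twins. A complete data sample $\mathcal{D}$ assigns to each root-to-leaf path $\lambda$ a number $N_\lambda\ge 0$ of units. For stage $u_j$, $n_{jk}$ is the number of units whose path passes through the $k$-th outgoing edge of some situation in $u_j$, $\overline{n}_j=\sum_k n_{jk}$. The BDepu score with imaginary sample size $\alpha>0$ is $$\mathrm{BDepu}(\mathcal{S},\mathcal{D};\alpha)=\prod_{j=1}^{J}\left[\frac{\Gamma(\overline{\alpha}_j)}{\Gamma(\overline{\alpha}_j+\overline{n}_j)}\prod_{k=1}^{r_j}\frac{\Gamma(\alpha_{jk}+n_{jk})}{\Gamma(\alpha_{jk})}\right],\quad \alpha_{jk}=\frac{\alpha}{|\Lambda(\mathcal{S})|}\sum_{m=1}^{h_j}|\Lambda(e^m_{jk})|,\quad \overline{\alpha}_j=\sum_{k=1}^{r_j}\alpha_{jk},$$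 where $h_j$ is the number of situations in $u_j$ and $e^m_{jk}$ is the $k$-th outgoing edge of the $m$-th situation of $u_j$. *)

From HB Require Import structures.
From mathcomp Require Import all_boot all_order all_algebra.
From mathcomp Require Import all_classical all_reals all_analysis.
Set Implicit Arguments. Unset Strict Implicit. Unset Printing Implicit Defensive.
Import Order.TTheory GRing.Theory Num.Theory.
Local Open Scope ring_scope.

(** An event tree is a finite rooted tree [Leaf | Node j children]; every
   [Node] is a situation and carries the label [j] of its stage; the k-th
   outgoing edge of a situation (0-indexed here) leads to its k-th child.
   A vertex is addressed by the sequence of edge indices from the root;
   a root-to-leaf path is the address of a leaf. *)
Inductive tree : Type := Leaf | Node of nat & seq tree.

Fixpoint paths (t : tree) : seq (seq nat) :=
  match t with
  | Leaf => [:: [::]]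
  | Node _ cs =>
      (fix aux (i : nat) (cs : seq tree) : seq (seq nat) :=
         match cs with
         | [::] => [::]
         | c :: cs' => map (cons i) (paths c) ++ aux i.+1 cs'
         end) 0%N cs
  end.

Fixpoint sits (t : tree) : seq (seq nat) :=
  match t with
  | Leaf => [::]
  | Node _ cs =>
      [::] :: (fix aux (i : nat) (cs : seq tree) : seq (seq nat) :=
         match cs with
         | [::] => [::]
         | c :: cs' => map (cons i) (sits c) ++ aux i.+1 cs'
         end) 0%N cs
  end.

Fixpoint subt (t : tree) (p : seq nat) : tree :=
  match p with
  | [::] => t
  | i :: p' => if t is Node _ cs then subt (nth Leaf cs i) p' else Leaf
  end.

Definition stage_of (t : tree) (p : seq nat) : nat :=
  if subt t p is Node j _ then j else 0%N.
Definition arity (t : tree) (p : seq nat) : nat :=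
  if subt t p is Node _ cs then size cs else 0%N.

Definition staged (t : tree) : Prop :=
  (forall p, p \in sits t -> (0 < arity t p)%N) /\
  (forall p q, p \in sits t -> q \in sits t ->
     stage_of t p = stage_of t q -> arity t p = arity t q).

Definition square_free (t : tree) : Prop :=
  forall p q, p \in sits t -> q \in sits t -> prefix p q -> p != q ->
    stage_of t p != stage_of t q.

(** The swap of the twin [Node a [seq Node u cs | cs <- css]] (root s0 in
    stage a, children s0k in stage u, subleaves s_kt = nth Leaf (css`_k) t):
    the new root is in stage u, with r2 children in stage a, the k-th edge
    of the t-th child leading to s_kt. *)
Definition swap_twin (a u r2 : nat) (css : seq (seq tree)) : tree :=
  Node u [seq Node a [seq nth Leaf cs t | cs <- css] | t <- iota 0 r2].

Inductive swap1 : tree -> tree -> (seq nat -> seq nat) -> Prop :=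
| swap1_here (a u r2 : nat) (css : seq (seq tree)) :
    all (fun cs => size cs == r2) css ->
    swap1 (Node a [seq Node u cs | cs <- css]) (swap_twin a u r2 css)
      (fun lam => if lam is k :: t :: rest then t :: k :: rest else lam)
| swap1_below (a : nat) (cs : seq tree) (i : nat) (t' : tree)
    (phi : seq nat -> seq nat) :
    (i < size cs)%N -> swap1 (nth Leaf cs i) t' phi ->
    swap1 (Node a cs) (Node a (set_nth Leaf cs i t'))
      (fun lam => if lam is j :: rest then
                    (if j == i then j :: phi rest else lam) else lam).

(** Swap operator: finite composition of single swaps (with the composed
    bijection of paths). *)
Inductive swaps : tree -> tree -> (seq nat -> seq nat) -> Prop :=
| swaps_nil (t : tree) : swaps t t id
| swaps_cons (t1 t2 t3 : tree) (f g : seq nat -> seq nat) :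
    swap1 t1 t2 f -> swaps t2 t3 g -> swaps t1 t3 (g \o f).

Definition Gamma_integrand (R : realType) (x t : R) : R :=
  t `^ (x - 1) * expR (- t).

Definition Gamma (R : realType) (x : R) : R :=
  fine (\int[@lebesgue_measure R]_(t in [set t : R | (0 < t)%R])
          (Gamma_integrand x t)%:E)%E.

Definition stages (t : tree) : seq nat :=
  undup [seq stage_of t p | p <- sits t].

Definition r_of (t : tree) (j : nat) : nat :=
  head 0%N [seq arity t p | p <- sits t & stage_of t p == j].

Definition through (p : seq nat) (k : nat) (lam : seq nat) : bool :=
  prefix (rcons p k) lam.

(** n_jk: number of units whose path passes through the k-th edge of some
    situation of stage j. A data sample is D : seq nat -> nat, D lam = N_lam. *)
Definition n_jk (t : tree) (D : seq nat -> nat) (j k : nat) : nat :=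
  \sum_(lam <- paths t |
          has (fun p => (stage_of t p == j) && through p k lam) (sits t))
     D lam.

Definition nbar_j (t : tree) (D : seq nat -> nat) (j : nat) : nat :=
  \sum_(k < r_of t j) n_jk t D j k.

Definition alpha_jk (R : realType) (t : tree) (alpha : R) (j k : nat) : R :=
  alpha / (size (paths t))%:R *
  \sum_(p <- sits t | stage_of t p == j) (count (through p k) (paths t))%:R.

Definition alphabar_j (R : realType) (t : tree) (alpha : R) (j : nat) : R :=
  \sum_(k < r_of t j) alpha_jk t alpha j k.

Definition BDepu (R : realType) (t : tree) (D : seq nat -> nat) (alpha : R)
  : R :=
  \prod_(j <- stages t)
    (Gamma (alphabar_j t alpha j) /
       Gamma (alphabar_j t alpha j + (nbar_j t D j)%:R) *
     \prod_(k < r_of t j)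
       (Gamma (alpha_jk t alpha j k + (n_jk t D j k)%:R) /
          Gamma (alpha_jk t alpha j k))).

From HB Require Import structures.
From mathcomp Require Import all_boot all_order all_algebra.
From mathcomp Require Import all_classical all_reals all_analysis.
Import Order.TTheory GRing.Theory Num.Theory.

(* A swap only reorders data. Along every root-to-leaf path it exchanges the
   two consecutive edges through the twin, so the multiset of labels
   (stage, edge index) met along the path is unchanged; and it permutes the
   root-to-leaf paths. It also keeps the set of pairs (stage, arity): the
   root and the children of the twin trade places but not their stages'
   arities. Every ingredient of BDepu is a function of these data: n_jk counts
   the units whose path meets the label (j, k), the numerator of alpha_jk
   counts the occurrences of (j, k) on all paths with multiplicity, and the
   stages with their r_j are read off the (stage, arity) pairs. *)

(* [paths (Node a cs)] and [sits (Node a cs)] are convertible to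
   [tag_children paths 0 cs] and [tag_children sits 0 cs]. *)
Definition tag_children (F : tree -> seq (seq nat)) :=
  fix aux (i : nat) (cs : seq tree) : seq (seq nat) :=
    if cs is c :: cs' then map (cons i) (F c) ++ aux i.+1 cs' else [::].

Lemma tag_childrenE F n cs : tag_children F n cs =
  flatten [seq map (cons (n + i)) (F (nth Leaf cs i)) | i <- iota 0 (size cs)].
Proof.
elim: cs n => [|c cs IH] n //=.
rewrite IH addn0 (iotaDl 1 0) -map_comp; congr (_ ++ flatten _).
by apply: eq_map => i /=; rewrite addnS addSn.
Qed.

Lemma paths_node a cs : paths (Node a cs) =
  flatten [seq map (cons i) (paths (nth Leaf cs i)) | i <- iota 0 (size cs)].
Proof. by rewrite -(tag_childrenE paths 0). Qed.

Lemma sits_node a cs : sits (Node a cs) = [::] ::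
  flatten [seq map (cons i) (sits (nth Leaf cs i)) | i <- iota 0 (size cs)].
Proof. by rewrite -(tag_childrenE sits 0). Qed.

Lemma count_sumE (T : Type) (a : pred T) s : count a s = \sum_(x <- s) a x.
Proof. by rewrite -sum1_count big_mkcond. Qed.

Lemma mem_paths_node a cs lam : (lam \in paths (Node a cs)) =
  if lam is i :: rest then (i < size cs) && (rest \in paths (nth Leaf cs i))
  else false.
Proof.
rewrite paths_node; apply/flatten_mapP/idP.
  by case=> i; rewrite mem_iota => /andP[_ Hi] /mapP[r Hr ->]; rewrite Hi.
case: lam => [|i rest] // /andP[Hi Hr]; exists i; first by rewrite mem_iota.
exact: map_f.
Qed.

Lemma count_paths_node (P : pred (seq nat)) a cs :
  count P (paths (Node a cs)) =
  \sum_(i <- iota 0 (size cs)) count (P \o cons i) (paths (nth Leaf cs i)).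
Proof.
rewrite paths_node count_flatten sumnE !big_map.
by apply: eq_bigr => i _; rewrite count_map.
Qed.

Fixpoint edge_labels (t : tree) (lam : seq nat) : seq (nat * nat) :=
  match lam, t with
  | i :: rest, Node a cs => (a, i) :: edge_labels (nth Leaf cs i) rest
  | _, _ => [::]
  end.

Lemma count_stage_through t j k lam : lam \in paths t ->
  \sum_(p <- sits t) ((stage_of t p == j) && through p k lam) =
  count_mem (j, k) (edge_labels t lam).
Proof.
elim: lam t => [|i rest IH] t.
  move=> _; rewrite big1 // => p _.
  by rewrite /through; case: p => [|? ?]; rewrite andbF.
case: t => [|a cs]; first by rewrite inE.
rewrite mem_paths_node => /andP[Hi Hr].
rewrite sits_node big_cons big_flatten /= big_map.
rewrite (bigD1_seq i) ?mem_iota ?iota_uniq //= big_map.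
rewrite [X in _ + (_ + X)]big1_seq ?addn0; last first.
  move=> i' /andP[Hi' _] /=; rewrite big_map big1 // => p _.
  by rewrite /through /stage_of /= (negbTE Hi') !andbF.
rewrite -IH //; congr (_ + _).
  rewrite /stage_of /through /= xpair_eqE (eq_sym k).
  by case: rest {IH Hr} => [|? ?]; rewrite /= ?andbT.
by apply: eq_bigr => p _; rewrite /stage_of /through /= eqxx.
Qed.

Lemma has_stage_through t j k lam : lam \in paths t ->
  has (fun p => (stage_of t p == j) && through p k lam) (sits t) =
  ((j, k) \in edge_labels t lam).
Proof.
move=> Hlam; rewrite has_count count_sumE count_stage_through //.
by rewrite -has_pred1 has_count.
Qed.

Lemma n_jkE t D j k :
  n_jk t D j k = \sum_(lam <- paths t | (j, k) \in edge_labels t lam) D lam.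
Proof.
rewrite /n_jk big_seq_cond [RHS]big_seq_cond; apply: eq_bigl => lam.
by case Hlam: (lam \in paths t); rewrite //= has_stage_through.
Qed.

Lemma sum_count_through t j k :
  \sum_(p <- sits t | stage_of t p == j) count (through p k) (paths t) =
  \sum_(lam <- paths t) count_mem (j, k) (edge_labels t lam).
Proof.
under eq_bigr do rewrite count_sumE.
rewrite exchange_big big_seq [RHS]big_seq; apply: eq_bigr => lam Hlam.
by rewrite -count_stage_through // big_mkcond; apply: eq_bigr => p _; case: ifP.
Qed.

Definition lookup (s : seq (nat * nat)) (j : nat) : nat :=
  head 0 [seq x.2 | x <- s & x.1 == j].

Definition functional (s : seq (nat * nat)) : Prop :=
  {in s &, forall x y, x.1 = y.1 -> x.2 = y.2}.

Lemma lookup_mem s x : functional s -> x \in s -> lookup s x.1 = x.2.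
Proof.
move=> Hfun Hx.
have : x \in [seq y <- s | y.1 == x.1] by rewrite mem_filter eqxx.
rewrite /lookup; case E: [seq y <- s | y.1 == x.1] => [|y ys] // _ /=.
have : y \in [seq y <- s | y.1 == x.1] by rewrite E mem_head.
by rewrite mem_filter => /andP[/eqP Hyx Hy]; apply: Hfun.
Qed.

Lemma eq_lookup s1 s2 : s1 =i s2 -> functional s1 -> lookup s1 =1 lookup s2.
Proof.
move=> E Hfun j.
have Hfun2 : functional s2 by move=> x y; rewrite -!E; apply: Hfun.
case Hj: (has (fun x => x.1 == j) s1).
  have [x Hx /eqP <-] := hasP Hj.
  by rewrite !lookup_mem // -E.
have Hj2 := Hj; rewrite (eq_has_r E) in Hj2.
by move: Hj Hj2; rewrite /lookup !has_filter => /negbFE/eqP -> /negbFE/eqP ->.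
Qed.

Definition stage_arity (t : tree) : seq (nat * nat) :=
  [seq (stage_of t p, arity t p) | p <- sits t].

Lemma stagedE t : staged t <->
  {in stage_arity t, forall x, 0 < x.2} /\ functional (stage_arity t).
Proof.
split=> [[Hpos Hfun]|[Hpos Hfun]]; split.
- by move=> _ /mapP[p Hp ->]; apply: Hpos.
- by move=> _ _ /mapP[p Hp ->] /mapP[q Hq ->]; apply: Hfun.
- by move=> p Hp; apply: (Hpos (_, _) (map_f _ Hp)).
- by move=> p q Hp Hq; apply: (Hfun (_, _) (_, _) (map_f _ Hp) (map_f _ Hq)).
Qed.

Lemma staged_eq_stage_arity t t' :
  stage_arity t =i stage_arity t' -> staged t -> staged t'.
Proof.
move=> E /stagedE[Hpos Hfun]; apply/stagedE; split=> [x|x y]; rewrite -!E.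
  exact: Hpos.
exact: Hfun.
Qed.

Lemma r_ofE t : r_of t =1 lookup (stage_arity t).
Proof.
by move=> j; rewrite /r_of /lookup /stage_arity filter_map -map_comp.
Qed.

Lemma stagesE t : stages t = undup [seq x.1 | x <- stage_arity t].
Proof. by rewrite /stages /stage_arity -map_comp. Qed.

Lemma mem_stage_arity_node a cs x : (x \in stage_arity (Node a cs)) =
  (x == (a, size cs)) ||
  has (fun i => x \in stage_arity (nth Leaf cs i)) (iota 0 (size cs)).
Proof.
rewrite /stage_arity sits_node map_cons inE map_flatten -map_comp.
congr orb; apply/flatten_mapP/hasP => -[i Hi Hx]; exists i => //.
  by move: Hx => /=; rewrite -map_comp.
by rewrite /= -map_comp.
Qed.

Lemma has_orl (T : Type) (b : bool) (P : pred T) s :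
  0 < size s -> has (fun x => b || P x) s = b || has P s.
Proof. by case: s => // y s _; case: b. Qed.

Lemma exchange_has (T1 T2 : eqType) (P : T1 -> T2 -> bool) s1 s2 :
  has (fun x => has (P x) s2) s1 = has (fun y => has (P^~ y) s1) s2.
Proof.
apply/hasP/hasP => -[x Hx /hasP[y Hy Hxy]]; exists y => //; apply/hasP.
  by exists x.
by exists x.
Qed.

Definition in_subleaves (css : seq (seq tree)) (r2 : nat) (x : nat * nat) :=
  has (fun k => has (fun t => x \in stage_arity (nth Leaf (nth [::] css k) t))
                    (iota 0 r2))
      (iota 0 (size css)).

Lemma mem_stage_arity_twin a u r2 css x :
  all (fun cs => size cs == r2) css -> 0 < size css ->
  (x \in stage_arity (Node a [seq Node u cs | cs <- css])) =
  [|| x == (a, size css), x == (u, r2) | in_subleaves css r2 x].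
Proof.
move=> Hsize Hcss; rewrite mem_stage_arity_node size_map; congr orb.
rewrite -has_orl ?size_iota //; apply: eq_in_has => k.
rewrite mem_iota => /andP[_ Hk]; have /eqP Hk2 := all_nthP [::] Hsize k Hk.
by rewrite /= (nth_map [::]) // mem_stage_arity_node Hk2.
Qed.

Lemma mem_stage_arity_swap_twin a u r2 css x : 0 < r2 ->
  (x \in stage_arity (swap_twin a u r2 css)) =
  [|| x == (u, r2), x == (a, size css) | in_subleaves css r2 x].
Proof.
move=> Hr2; rewrite mem_stage_arity_node size_map size_iota; congr orb.
rewrite /in_subleaves exchange_has -has_orl ?size_iota //; apply: eq_in_has => t.
rewrite mem_iota => /andP[_ Ht].
rewrite /= (nth_map 0) ?size_iota // nth_iota // mem_stage_arity_node size_map.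
congr orb; apply: eq_in_has => k; rewrite mem_iota => /andP[_ Hk].
by rewrite /= (nth_map [::]).
Qed.

Lemma swap1_stage_arity t t' f : swap1 t t' f ->
  {in stage_arity t, forall x, 0 < x.2} -> stage_arity t =i stage_arity t'.
Proof.
elim=> {t t' f} [a u r2 css Hsize | a cs i t' phi Hi _ IH] Hpos x.
  (* Without positivity an empty layer of the twin could vanish or appear. *)
  have Hcss : 0 < size css.
    have := Hpos (a, size [seq Node u cs | cs <- css]); rewrite size_map; apply.
    by rewrite mem_stage_arity_node size_map eqxx.
  have mem_twin := mem_stage_arity_twin a u _ _ _ Hsize Hcss.
  have Hr2 : 0 < r2 by apply: (Hpos (u, r2)); rewrite mem_twin eqxx orbT.
  by rewrite mem_twin mem_stage_arity_swap_twin // orbCA.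
have Hpos_i : {in stage_arity (nth Leaf cs i), forall x, 0 < x.2}.
  move=> y Hy; apply: Hpos; rewrite mem_stage_arity_node; apply/orP; right.
  by apply/hasP; exists i => //; rewrite mem_iota.
rewrite !mem_stage_arity_node size_set_nth (maxn_idPr Hi); congr orb.
apply: eq_in_has => j _ /=; rewrite nth_set_nth /=.
by case: (eqVneq j i) => [->|//]; rewrite (IH Hpos_i).
Qed.

Lemma swap1_paths t t' f : swap1 t t' f -> perm_eq (paths t') (map f (paths t)).
Proof.
elim=> {t t' f} [a u r2 css Hsize | a cs i t' phi Hi _ IH];
  apply/permP => P; rewrite count_map.
  pose n k t := count (fun l => P [:: t, k & l])
                      (paths (nth Leaf (nth [::] css k) t)).
  rewrite /swap_twin !count_paths_node !size_map size_iota.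
  rewrite (eq_big_seq (fun t => \sum_(k <- iota 0 (size css)) n k t));
    last first.
    move=> t; rewrite mem_iota => /andP[_ Ht].
    rewrite (nth_map 0) ?size_iota // nth_iota // count_paths_node size_map.
    apply: eq_big_seq => k; rewrite mem_iota => /andP[_ Hk].
    by rewrite (nth_map [::]).
  rewrite [RHS](eq_big_seq (fun k => \sum_(t <- iota 0 r2) n k t)); last first.
    move=> k; rewrite mem_iota => /andP[_ Hk].
    have /eqP Hk2 := all_nthP [::] Hsize k Hk.
    by rewrite (nth_map [::]) // count_paths_node Hk2.
  exact: exchange_big.
rewrite !count_paths_node size_set_nth (maxn_idPr Hi).
apply: eq_big_seq => j _; rewrite nth_set_nth /=.
case: (eqVneq j i) => [->|Hji].
  by rewrite (permP IH) count_map; apply: eq_count => l /=; rewrite eqxx.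
by apply: eq_count => l /=; rewrite (negbTE Hji).
Qed.

Lemma swap1_edge_labels t t' f : swap1 t t' f ->
  {in paths t, forall lam,
    perm_eq (edge_labels t' (f lam)) (edge_labels t lam)}.
Proof.
elim=> {t t' f} [a u r2 css Hsize | a cs i t' phi _ _ IH] lam.
  rewrite mem_paths_node size_map; case: lam => [|k rest] // /andP[Hk].
  have /eqP Hk2 := all_nthP [::] Hsize k Hk.
  rewrite (nth_map [::]) // mem_paths_node Hk2.
  case: rest => [|t rest] // /andP[Ht _].
  rewrite /swap_twin /= (nth_map 0) ?size_iota // nth_iota // add0n.
  rewrite !(nth_map [::]) //=; apply/permP => p /=.
  by rewrite addnCA.
rewrite mem_paths_node; case: lam => [|j rest] // /andP[_ Hrest].
case: (eqVneq j i) => [Eji|Hji] /=; rewrite nth_set_nth /=.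
  by rewrite Eji eqxx perm_cons IH // -Eji.
by rewrite (negbTE Hji).
Qed.

Definition label_preserving (t t' : tree) (f : seq nat -> seq nat) : Prop :=
  [/\ stage_arity t =i stage_arity t',
      perm_eq (paths t') (map f (paths t)) &
      {in paths t, forall lam,
        perm_eq (edge_labels t' (f lam)) (edge_labels t lam)}].

Lemma label_preserving_id t : label_preserving t t id.
Proof. by split=> //; rewrite map_id. Qed.

Lemma label_preserving_comp t1 t2 t3 f g :
  label_preserving t1 t2 f -> label_preserving t2 t3 g ->
  label_preserving t1 t3 (g \o f).
Proof.
move=> [E12 P12 L12] [E23 P23 L23]; split.
- by move=> x; rewrite E12 E23.
- by rewrite map_comp (perm_trans P23) // perm_map.
move=> lam Hlam; have Hf : f lam \in paths t2 by rewrite (perm_mem P12) map_f.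
exact: perm_trans (L23 _ Hf) (L12 _ Hlam).
Qed.

Lemma swap1_label_preserving t t' f :
  staged t -> swap1 t t' f -> label_preserving t t' f.
Proof.
move=> /stagedE[Hpos _] Hswap; split.
- exact: swap1_stage_arity _ _ _ Hswap Hpos.
- exact: swap1_paths _ _ _ Hswap.
- exact: swap1_edge_labels _ _ _ Hswap.
Qed.

Lemma swaps_label_preserving t t' f :
  staged t -> swaps t t' f -> label_preserving t t' f.
Proof.
move=> + Hswaps; elim: Hswaps => {t t' f} [t | t1 t2 t3 f g Hswap _ IH] Hst.
  exact: label_preserving_id.
have Hlp := swap1_label_preserving _ _ _ Hst Hswap.
have [E _ _] := Hlp.
exact: label_preserving_comp Hlp (IH (staged_eq_stage_arity _ _ E Hst)).
Qed.

Local Open Scope ring_scope.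

Section LabelPreserving.

Variables (t t' : tree) (f : seq nat -> seq nat).
Hypothesis lp : label_preserving t t' f.

Lemma stages_label_preserving : perm_eq (stages t') (stages t).
Proof.
have [E _ _] := lp; rewrite !stagesE; apply: uniq_perm; rewrite ?undup_uniq //.
by move=> j; rewrite !mem_undup; apply: eq_mem_map.
Qed.

Lemma r_of_label_preserving : staged t -> r_of t' = r_of t.
Proof.
have [E _ _] := lp; move=> /stagedE[_ Hfun]; apply/funext => j.
by rewrite !r_ofE (eq_lookup _ _ E Hfun).
Qed.

Lemma alpha_jk_label_preserving (R : realType) (alpha : R) :
  alpha_jk t' alpha = alpha_jk t alpha.
Proof.
have [_ P L] := lp; apply/funext => j; apply/funext => k.
rewrite /alpha_jk (perm_size P) size_map -!natr_sum !sum_count_through.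
rewrite (perm_big _ P) big_map big_seq [in RHS]big_seq.
by congr (_ * _%:R); apply: eq_bigr => lam Hlam; apply/permP/L.
Qed.

Lemma n_jk_label_preserving D D' :
  {in paths t, forall lam, D' (f lam) = D lam} -> n_jk t' D' = n_jk t D.
Proof.
have [_ P L] := lp; move=> HD; apply/funext => j; apply/funext => k.
rewrite !n_jkE (perm_big _ P) big_map big_seq_cond [RHS]big_seq_cond.
apply: eq_big => [lam|lam /andP[Hlam _]]; last exact: HD.
by case Hlam: (lam \in paths t); rewrite //= (perm_mem (L _ Hlam)).
Qed.

Lemma BDepu_label_preserving (R : realType) D D' (alpha : R) :
  staged t -> {in paths t, forall lam, D' (f lam) = D lam} ->
  BDepu t D alpha = BDepu t' D' alpha.
Proof.
move=> Hst HD; rewrite /BDepu /alphabar_j /nbar_j r_of_label_preserving //.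
rewrite alpha_jk_label_preserving (n_jk_label_preserving _ _ HD).
by rewrite (perm_big _ stages_label_preserving).
Qed.

End LabelPreserving.

Theorem lemma2 (R : realType) (S S' : tree) (phi : seq nat -> seq nat)
  (alpha : R) (D D' : seq nat -> nat) :
  staged S -> square_free S -> swaps S S' phi -> 0 < alpha ->
  (forall lam, lam \in paths S -> D' (phi lam) = D lam) ->
  BDepu S D alpha = BDepu S' D' alpha.
Proof.
move=> Hst _ Hswaps _ HD.
have Hlp := swaps_label_preserving _ _ _ Hst Hswaps.
exact: BDepu_label_preserving Hlp _ _ _ _ Hst HD.
Qed.
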